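(* For every $\varepsilon\in(0,1/4)$ and every $k\ge \varepsilon^{-1}$, any (possibly randomized) two-player protocol for Max-Card-$k$ (in the two-player model described in the context) with an approximation guarantee of $\frac{2}{3}+\varepsilon$ must have communication complexity $\Omega\!\left(\frac{N\varepsilon}{k}\right)$ bits, where $N=|W|$ is the size of the ground set.
   Context: Two-player model for Max-Card-$k$. The global information known to both players consists of a positive integer $k$, a finite ground set $W$, and a partition $W=W_A\,\dot\cup\, W_B$. Alice privately receives a set $V_A\subseteq W_A$ and Bob privately receives a set $V_B\subseteq W_B$. There is a non-negative, monotone, submodular function $f:2^W\to\mathbb{R}_{\ge 0}$; Alice can query $f$ (via a value oracle) only on subsets of $W_A$ (in particular she may query sets of size larger than $k$), while Bob can query $f$ on any subset of $W$. A protocol consists of two possibly randomized algorithms: Alice's algorithm computes a message $m$ (a bit string) from the global information, $V_A$ and her oracle; then Bob's algorithm computes an output set $S\subseteq V_A\cup V_B$ with $|S|\le k$ from the global information, $V_B$, $m$ and his oracle. The communication complexity is the maximum length in bits of $m$ over all inputs and the randomness. The protocol has approximation guarantee $\rho$ if for every instance $\mathbb{E}[f(S)]\ge \rho\cdot\max\{f(T): T\subseteq V_A\cup V_B,\ |T|\le k\}$. *)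

From HB Require Import structures.
From mathcomp Require Import all_boot all_order all_algebra.
From mathcomp Require Import reals.
Set Implicit Arguments. Unset Strict Implicit. Unset Printing Implicit Defensive.
Import Order.TTheory GRing.Theory Num.Theory.
Local Open Scope ring_scope.

(* Ground set W = 'I_N; W_A is a set, W_B := ~: W_A (complement). *)

Section MaxCardK.
Variables (R : realType) (N : nat).
Local Notation setW := {set 'I_N}.

Definition nonneg_setfun (f : setW -> R) := forall A : setW, 0 <= f A.
Definition monotone_setfun (f : setW -> R) :=
  forall A B : setW, A \subset B -> f A <= f B.
Definition submodular_setfun (f : setW -> R) :=
  forall A B : setW, f (A :|: B) + f (A :&: B) <= f A + f B.
Definition admissible_f (f : setW -> R) :=
  [/\ nonneg_setfun f, monotone_setfun f & submodular_setfun f].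

Definition valid_input (WA VA VB : setW) (f : setW -> R) :=
  [/\ VA \subset WA, VB \subset ~: WA & admissible_f f].

Definition is_distr (Omega : finType) (p : Omega -> R) :=
  (forall w, 0 <= p w) /\ \sum_(w : Omega) p w = 1.

(* Since oracle queries are
   unrestricted in number, Alice's algorithm is a function of V_A, the oracle
   (restricted, see [protocol_wf]) and her random seed; Bob's algorithm is a
   function of V_B, the message, the full oracle and his random seed. *)
Record protocol := Protocol {
  OmegaA : finType;
  pA : OmegaA -> R;
  OmegaB : finType;
  pB : OmegaB -> R;
  alice : setW -> (setW -> R) -> OmegaA -> seq bool;
  bob : setW -> seq bool -> (setW -> R) -> OmegaB -> setW }.

Definition bob_output (P : protocol) VA VB f (rA : OmegaA P) (rB : OmegaB P) :=
  bob VB (alice VA f rA) f rB.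

Definition protocol_wf (k : nat) (WA : setW) (P : protocol) :=
  [/\ is_distr (@pA P), is_distr (@pB P),
   (* Alice may only query f on subsets of W_A *)
   (forall (VA : setW) (f g : setW -> R) (rA : OmegaA P), VA \subset WA -> admissible_f f -> admissible_f g ->
      (forall T : setW, T \subset WA -> f T = g T) -> alice VA f rA = alice VA g rA) &
   (forall (VA VB : setW) (f : setW -> R) (rA : OmegaA P) (rB : OmegaB P), valid_input WA VA VB f -> 0 < pA rA -> 0 < pB rB ->
      bob_output VA VB f rA rB \subset VA :|: VB /\
      (#|bob_output VA VB f rA rB| <= k)%N)].

Definition expected_value (P : protocol) VA VB (f : setW -> R) : R :=
  \sum_(rA : OmegaA P) \sum_(rB : OmegaB P)
     pA rA * pB rB * f (bob_output VA VB f rA rB).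

Definition approx_guarantee (k : nat) (WA : setW) (P : protocol) (rho : R) :=
  forall (VA VB : setW) f, valid_input WA VA VB f ->
    forall T : setW, T \subset VA :|: VB -> (#|T| <= k)%N ->
      rho * f T <= expected_value P VA VB f.

Definition comm_at_most (WA : setW) (P : protocol) (L : nat) :=
  forall (VA : setW) (f : setW -> R) (rA : OmegaA P), VA \subset WA -> admissible_f f -> 0 < pA rA ->
    (size (alice VA f rA) <= L)%N.

End MaxCardK.

From HB Require Import structures.
From mathcomp Require Import all_boot all_order all_algebra.
From mathcomp Require Import reals lra zify.
Set Implicit Arguments. Unset Strict Implicit. Unset Printing Implicit Defensive.
Import Order.TTheory GRing.Theory Num.Theory.

(* Let [phi] be the partial sums of the weights [3r - i].  For an element [b]
   and a hidden [r]-set [O] avoiding [b], the function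
     f_O(S) = phi |S \ b| + [b \in S] (phi (3r) - phi |(O \cup S) \ b|)
   is monotone submodular, equals [phi |S|] away from [b] (so Alice cannot see
   [O]), is maximal on [b + O], and is at most 2/3 of that maximum on any set
   of at most [r + 1] elements disjoint from [O].  Split Alice's side into [n]
   blocks of two halves of size [r] and give her one half of each block,
   according to a bit string [x]; Bob only holds [b].  Taking for [O] the half
   of block [j] held by Alice, a (2/3 + eps)-approximation must, with
   probability at least [3 eps] over Alice's seed, send a message that pins
   down [x j]: otherwise Bob's output is also a feasible output for some input
   [x'] with [x' j != x j], so it avoids [O] and is worth at most 2/3.  Hence
   every [x] has a possible message fixing [3 eps n] of its bits; as the [2^n]
   strings share fewer than [2^(L+1)] messages, some message fixes at most [L]
   bits, so [3 eps n <= L].  With [n ~ N / 2k] this is the bound; ground sets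
   of size at most [2k] are handled by the cardinality function. *)

Lemma setU1_ind (T : finType) (P : {set T} -> Prop) :
  P set0 -> (forall x (A : {set T}), x \notin A -> P A -> P (x |: A)) ->
  forall A, P A.
Proof.
move=> P0 PS A; move Hn : #|A| => n; elim: n A Hn => [|n IH] A Hn.
  by move/eqP: Hn; rewrite cards_eq0 => /eqP ->.
have /card_gt0P[x xA] : (0 < #|A|)%N by rewrite Hn.
rewrite -(setD1K xA); apply: PS; first by rewrite setD11.
by apply: IH; move: Hn; rewrite (cardsD1 x) xA => -[].
Qed.

Section LocalToGlobal.
Variables (R : realDomainType) (T : finType) (f : {set T} -> R).
Implicit Types (A B X Y : {set T}) (e : T).
Local Open Scope ring_scope.

Hypothesis f_le_add1 : forall X e, f X <= f (e |: X).
Hypothesis f_local_submod : forall X e1 e2, e1 \notin X -> e2 \notin X -> e1 != e2 ->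
  f (e1 |: (e2 |: X)) + f X <= f (e1 |: X) + f (e2 |: X).

Lemma le_setfun_subset A B : A \subset B -> f A <= f B.
Proof.
move=> /setUidPr <-; elim/setU1_ind: B => [|x D _ IH]; first by rewrite setU0.
by rewrite setUCA; apply: le_trans IH _.
Qed.

Lemma marginal_antitone X Y e : X \subset Y -> e \notin Y ->
  f (e |: Y) + f X <= f (e |: X) + f Y.
Proof.
move=> /setUidPr <-; elim/setU1_ind: Y => [|x D _ IH]; first by rewrite setU0 addrC.
rewrite setUCA; set Z := X :|: D; have [xZ|xZ] := boolP (x \in Z).
  by rewrite (setUidPr _) ?sub1set //; apply: IH.
rewrite in_setU1 negb_or => /andP[ex eZ].
have := f_local_submod eZ xZ ex; have := IH eZ; lra.
Qed.

Lemma submodular_of_local A B : f (A :|: B) + f (A :&: B) <= f A + f B.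
Proof.
have sub : A :&: B \subset A by apply: subsetIl.
suff : forall D, f (A :|: D) + f (A :&: B) <= f A + f (A :&: B :|: D).
  by move/(_ B); rewrite setIC setIK.
elim/setU1_ind => [|x D _ IH]; first by rewrite !setU0 addrC.
rewrite !(setUCA _ [set x]); set Z := A :|: D.
have [xZ|xZ] := boolP (x \in Z).
  rewrite (setUidPr _) ?sub1set //; apply: le_trans IH _.
  by rewrite lerD2l le_setfun_subset // subsetUr.
have := marginal_antitone (setSU D sub) xZ; lra.
Qed.

End LocalToGlobal.

Section HardFunction.
Variables (T : finType) (b : T) (g : nat -> nat) (top : nat).
Implicit Types (A O S X : {set T}) (e : T).

Hypothesis g_nonincr : forall i, g i.+1 <= g i.
Hypothesis g_convex : forall i, g i.+1 + g i.+1 <= g i + g i.+2.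

Definition phi t := \sum_(i < t) g i.

Hypothesis phi_le_top : forall t, phi t <= top.

Lemma phiS t : phi t.+1 = phi t + g t.
Proof. by rewrite /phi big_ord_recr. Qed.

Lemma phi_mono m n : m <= n -> phi m <= phi n.
Proof.
move=> /subnKC <-; elim: (n - m) => [|d IH]; first by rewrite addn0.
by rewrite addnS phiS (leq_trans IH) ?leq_addr.
Qed.

Lemma g_antitone m n : m <= n -> g n <= g m.
Proof.
move=> /subnKC <-; elim: (n - m) => [|d IH]; first by rewrite addn0.
by rewrite addnS (leq_trans (g_nonincr _)).
Qed.

Lemma g_convex_gap t s : t <= s -> g s + g t.+1 <= g t + g s.+1.
Proof.
move=> /subnKC <-; elim: (s - t) => [|d IH]; first by rewrite addn0 addnC.
by rewrite !addnS; have := g_convex (t + d); lia.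
Qed.

Definition hard O S : nat :=
  if b \in S then phi #|S :\ b| + (top - phi #|(O :|: S) :\ b|)
  else phi #|S :\ b|.

Lemma card_setU1D1 A e :
  #|(e |: A) :\ b| = #|A :\ b| + ((e != b) && (e \notin A)).
Proof.
have [eA|eA] := boolP (e \in A); first by rewrite (setUidPr _) ?sub1set // andbF addn0.
have [->|eb] := eqVneq e b; first by rewrite setDUl setDv set0U addn0.
have -> : (e |: A) :\ b = e |: (A :\ b).
  by apply/setP=> y; rewrite !inE; case: (y =P e) => [->|]; rewrite ?eb // orFb.
by rewrite cardsU1 !inE (negbTE eA) andbF addnC.
Qed.

Lemma leq_card_setD1U O X : #|X :\ b| <= #|(O :|: X) :\ b|.
Proof. by rewrite subset_leq_card // setSD // subsetUr. Qed.

Lemma hard_le_add1 O X e : hard O X <= hard O (e |: X).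
Proof.
have [eX|eX] := boolP (e \in X); first by rewrite (setUidPr _) ?sub1set.
rewrite /hard setUCA !card_setU1D1 in_setU1 eq_sym.
have := leq_card_setD1U O X; set t := #|X :\ b|; set s := #|_ :\ b| => ts.
have := g_antitone ts; have := phiS t; have := phiS s.
have := phi_le_top s; have := phi_le_top s.+1.
rewrite !inE (negbTE eX) orbF.
by case: (e == b); case: (b \in X); case: (e \in O); rewrite /= ?addn0 ?addn1; lia.
Qed.

(* The only delicate case is [b \in X] with [e1, e2 \notin O], where the
   inequality is [g_convex_gap] at [t = #|X :\ b| <= s = #|(O :|: X) :\ b|]. *)
Lemma hard_local_submod O X e1 e2 : e1 \notin X -> e2 \notin X -> e1 != e2 ->
  hard O (e1 |: (e2 |: X)) + hard O X <= hard O (e1 |: X) + hard O (e2 |: X).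
Proof.
move=> e1X e2X e12; rewrite /hard !(setUCA O) !card_setU1D1.
have := leq_card_setD1U O X; set t := #|X :\ b|; set s := #|_ :\ b| => ts.
have := g_antitone ts; have := g_convex_gap ts; have := g_nonincr t.
have := phiS t; have := phiS t.+1; have := phiS s; have := phiS s.+1.
have := phi_le_top s; have := phi_le_top s.+1; have := phi_le_top s.+2.
rewrite !inE ![b == _]eq_sym (negbTE e1X) (negbTE e2X) (negbTE e12) !orbF.
by case: (e1 == b); case: (e2 == b); case: (b \in X); case: (e1 \in O);
  case: (e2 \in O); rewrite /= ?addn0 ?addn1 ?addn2; lia.
Qed.

Lemma hard_le_top O S : hard O S <= top.
Proof.
rewrite /hard; case: ifP => _; last exact: phi_le_top.
have := phi_mono (leq_card_setD1U O S); have := phi_le_top #|(O :|: S) :\ b|; lia.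
Qed.

Lemma hard_notin O S : b \notin S -> hard O S = phi #|S|.
Proof.
by move=> bS; rewrite /hard (negbTE bS) (setDidPl _) // disjoint_sym disjoints1.
Qed.

Lemma hard_in O S : b \in S -> b \notin O -> [disjoint S & O] ->
  hard O S = phi #|S :\ b| + (top - phi (#|O| + #|S :\ b|)).
Proof.
move=> bS bO dSO; have Ob : O :\ b = O by apply/setDidPl; rewrite disjoint_sym disjoints1.
rewrite /hard bS setDUl Ob cardsU disjoint_setI0 ?cards0 ?subn0 //.
by rewrite disjoint_sym (disjointWl (subsetDl S [set b])).
Qed.

Lemma hard_opt O : b \notin O -> hard O (b |: O) = top.
Proof.
move=> bO; rewrite /hard setU11 setUCA setUid setU1K //.
by have := phi_le_top #|O|; lia.
Qed.

End HardFunction.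

Section TriangularWeights.
Variable r : nat.

Definition tri i := 3 * r - i.
Definition tri_top := phi tri (3 * r).

Lemma tri_nonincr i : tri i.+1 <= tri i.
Proof. rewrite /tri; lia. Qed.

Lemma tri_convex i : tri i.+1 + tri i.+1 <= tri i + tri i.+2.
Proof. rewrite /tri; lia. Qed.

Lemma phi_tri_min t :
  2 * phi tri t + minn t (3 * r) * minn t (3 * r) = minn t (3 * r) * (6 * r + 1).
Proof.
elim: t => [|t IH]; first by rewrite /phi big_ord0 min0n.
rewrite phiS mulnDr [tri t]/tri; move: IH; case: (leqP (3 * r) t) => h.
  by rewrite (minn_idPr (leqW h)); lia.
rewrite (minn_idPl h); nia.
Qed.

Lemma phi_tri_closed t : t <= 3 * r -> 2 * phi tri t + t * t = t * (6 * r + 1).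
Proof. by move=> tr; have := phi_tri_min t; rewrite (minn_idPl tr). Qed.

Lemma phi_tri_le_top t : phi tri t <= tri_top.
Proof.
have := phi_tri_min t; have := phi_tri_min (3 * r); rewrite /tri_top minnn.
have : minn t (3 * r) <= 3 * r by apply: geq_minr.
set m := minn t _; nia.
Qed.

Lemma tri_top_gt0 : 0 < r -> 0 < tri_top.
Proof. by move=> r_gt0; have := phi_tri_closed (leqnn (3 * r)); rewrite /tri_top; nia. Qed.

Lemma phi_tri_succ_le : 3 <= r -> 3 * phi tri r.+1 <= 2 * tri_top.
Proof.
move=> r3; have := phi_tri_closed (_ : r.+1 <= 3 * r).
have := phi_tri_closed (leqnn (3 * r)); rewrite /tri_top; nia.
Qed.

(* Equality holds at [t = r]: this is where the ratio 2/3 comes from. *)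
Lemma phi_tri_gap t : t <= r ->
  3 * (phi tri t + (tri_top - phi tri (r + t))) <= 2 * tri_top.
Proof.
move=> tr; have := phi_tri_le_top (r + t).
have := phi_tri_closed (_ : t <= 3 * r); have := phi_tri_closed (_ : r + t <= 3 * r).
have := phi_tri_closed (leqnn (3 * r)); rewrite /tri_top; nia.
Qed.

End TriangularWeights.

Lemma exists_inj_into (T U : finType) (A : {set U}) : #|T| <= #|A| ->
  exists2 f : T -> U, injective f & forall x, f x \in A.
Proof.
move=> le_TA; exists (fun x => enum_val (widen_ord le_TA (enum_rank x))).
  by move=> x y /enum_val_inj [] /ord_inj /enum_rank_inj.
by move=> x; apply: enum_valP.
Qed.

Definition pad L (s : seq bool) : (L.+1).-tuple bool :=
  insubd [tuple of nseq L.+1 false] (s ++ true :: nseq (L - size s) false).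

Lemma val_pad L s : size s <= L -> val (pad L s) = s ++ true :: nseq (L - size s) false.
Proof.
by move=> sL; rewrite /pad insubdK // unfold_in /= size_cat /= size_nseq; apply/eqP; lia.
Qed.

Lemma pad_inj L : {in [pred s | size s <= L] &, injective (pad L)}.
Proof.
move=> s1 s2 s1L s2L /(congr1 val); rewrite !val_pad // => E.
have := congr1 (fun s => index true (rev s)) E.
rewrite !rev_cat !rev_cons !rev_nseq -!cats1 -!catA !index_cat !mem_nseq /= !andbF /=.
rewrite !size_nseq !addn0 => e12.
have sz : size s1 = size s2 by move: s1L s2L e12; rewrite !inE; lia.
by move/eqP: E; rewrite eqseq_cat // => /andP[/eqP].
Qed.

Lemma pad_neq0 L s : size s <= L -> pad L s != [tuple of nseq L.+1 false].
Proof.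
move=> sL; apply/negP => /eqP /(congr1 (fun t : (L.+1).-tuple bool => true \in val t)).
by rewrite val_pad // mem_cat in_cons eqxx orbT /= in_cons mem_nseq andbF.
Qed.

Section MessageCounting.
Variables (n L : nat).
Local Notation X := {ffun 'I_n -> bool}.

Lemma card_agree_on (x1 : X) (J : {set 'I_n}) :
  #|[set x : X | [forall j in J, x j == x1 j]]| <= 2 ^ (n - #|J|).
Proof.
pose restr (x : X) : {ffun {j | j \notin J} -> bool} := [ffun j => x (val j)].
apply: leq_trans (@leq_card_in _ _ restr _ _) _.
  move=> x x'; rewrite !inE => /forall_inP xJ /forall_inP x'J /ffunP E.
  apply/ffunP=> j; have [jJ|jJ] := boolP (j \in J).
    by rewrite (eqP (xJ j jJ)) (eqP (x'J j jJ)).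
  by have := E (exist _ j jJ); rewrite !ffunE.
rewrite card_ffun card_bool card_sig leq_exp2l //.
have -> : #|[pred x | x \notin J]| = #|~: J| by apply: eq_card => j; rewrite !inE.
have := cardsC J; rewrite card_ord; lia.
Qed.

Variables (M : X -> seq bool) (H : X -> {set 'I_n}).
Hypothesis size_M : forall x, size (M x) <= L.
Hypothesis M_determines : forall x1 x2, M x1 = M x2 -> {in H x1, x2 =1 x1}.

Lemma card_message_fiber h t : (forall x, h <= #|H x|) ->
  #|[set x | pad L (M x) == t]| <= 2 ^ (n - h).
Proof.
move=> H_ge; have [->|[x1]] := set_0Vmem [set x | pad L (M x) == t]; first by rewrite cards0.
rewrite inE => /eqP e1.
apply: leq_trans (subset_leq_card _) (leq_trans (card_agree_on x1 (H x1)) _).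
  apply/subsetP=> x2; rewrite !inE => /eqP e2; apply/forall_inP=> j j1.
  have /pad_inj M21 := etrans e2 (esym e1).
  by rewrite (M_determines (esym (M21 (size_M x2) (size_M x1))) j1).
by rewrite leq_pexp2l // leq_sub2l.
Qed.

Lemma exists_small_determined_set : exists x, #|H x| <= L.
Proof.
case: (boolP [exists x, #|H x| <= L]) => [/existsP //|/existsPn big_H]; exfalso.
have H_ge x : L.+1 <= #|H x| by rewrite ltnNge big_H.
have L_lt_n : L < n.
  apply: leq_trans (H_ge [ffun=> false]) _.
  by have := max_card (H [ffun=> false]); rewrite card_ord.
pose zero := [tuple of nseq L.+1 false].
have : 2 ^ n <= (2 ^ L.+1).-1 * 2 ^ (n - L.+1).
  have cardX : #|{: X}| = 2 ^ n by rewrite card_ffun card_bool card_ord.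
  rewrite -cardX -sum1_card (partition_big (fun x => pad L (M x)) (predC1 zero)) /=;
    last by move=> x _; apply: pad_neq0.
  apply: (@leq_trans (\sum_(t | t != zero) 2 ^ (n - L.+1))).
    apply: leq_sum => t _; rewrite sum1_card; apply: leq_trans (card_message_fiber t H_ge).
    by apply/eq_leq/eq_card => x; rewrite !inE.
  by rewrite sum_nat_const cardC1 card_tuple card_bool.
rewrite -{1}(subnKC L_lt_n) expnD leq_pmul2r ?expn_gt0 //.
by rewrite leqNgt ltn_predL expn_gt0.
Qed.

End MessageCounting.

Local Open Scope ring_scope.

Lemma admissible_of_local (R : realType) N (f : {set 'I_N} -> R) :
  (forall S, 0 <= f S) -> (forall X e, f X <= f (e |: X)) ->
  (forall (X : {set 'I_N}) e1 e2, e1 \notin X -> e2 \notin X -> e1 != e2 ->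
     f (e1 |: (e2 |: X)) + f X <= f (e1 |: X) + f (e2 |: X)) ->
  admissible_f f.
Proof.
move=> f_ge0 f_le_add1 f_loc; split => // A B; first exact: le_setfun_subset.
exact: submodular_of_local.
Qed.

Section HardInstance.
Variables (R : realType) (N : nat) (b : 'I_N) (r : nat).
Implicit Types (O S X : {set 'I_N}).
Local Notation hardN := (hard b (tri r) (tri_top r)).

Definition hardR O S : R := (hardN O S)%:R / (tri_top r)%:R.

Lemma hardR_admissible O : admissible_f (hardR O).
Proof.
have top_inv_ge0 : 0 <= (tri_top r)%:R^-1 :> R by rewrite invr_ge0.
apply: admissible_of_local => [S|X e|X e1 e2 e1X e2X e12].
- by rewrite divr_ge0.
- by rewrite ler_wpM2r // ler_nat (hard_le_add1 _ (@tri_nonincr r) (@phi_tri_le_top r)).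
- rewrite -!mulrDl ler_wpM2r // -!natrD ler_nat.
  exact: (hard_local_submod _ (@tri_nonincr r) (@tri_convex r) (@phi_tri_le_top r)).
Qed.

Lemma hardR_notin O O' S : b \notin S -> hardR O S = hardR O' S.
Proof. by move=> bS; rewrite /hardR !hard_notin. Qed.

Lemma hardR_le1 O S : hardR O S <= 1.
Proof.
have [r0|r_gt0] := posnP r; first by rewrite /hardR /tri_top r0 /phi big_ord0 invr0 mulr0.
rewrite ler_pdivrMr ?ltr0n ?tri_top_gt0 // mul1r ler_nat.
exact: (hard_le_top _ (@phi_tri_le_top r)).
Qed.

Lemma hardR_opt O : (0 < r)%N -> b \notin O -> hardR O (b |: O) = 1.
Proof.
move=> r_gt0 bO; rewrite /hardR (hard_opt (@phi_tri_le_top r) bO) divff //.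
by rewrite pnatr_eq0 -lt0n tri_top_gt0.
Qed.

Lemma hardR_disjoint O S : (3 <= r)%N -> b \notin O -> #|O| = r ->
  [disjoint S & O] -> (#|S| <= r.+1)%N -> hardR O S <= 2 / 3.
Proof.
move=> r_ge3 bO cardO dSO cardS.
suff : (3 * hardN O S <= 2 * tri_top r)%N.
  rewrite -(ler_nat R) !natrM => h; rewrite ler_pdivrMr ?ltr0n ?tri_top_gt0 //; last lia.
  lra.
have [bS|bS] := boolP (b \in S).
  rewrite hard_in // cardO; apply: (@phi_tri_gap r).
  by move: cardS; rewrite (cardsD1 b S) bS.
rewrite hard_notin //; apply: leq_trans _ (phi_tri_succ_le r_ge3).
by rewrite leq_mul2l phi_mono.
Qed.

End HardInstance.

Section Distributions.
Variable R : realType.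

Lemma expectation_le (I J : finType) (p : I -> R) (q : J -> R) (F : I -> J -> R) u :
  is_distr p -> is_distr q -> (forall i j, 0 < p i -> 0 < q j -> F i j <= u i) ->
  \sum_i \sum_j p i * q j * F i j <= \sum_i p i * u i.
Proof.
move=> [p_ge0 _] [q_ge0 q1] Fu; apply: ler_sum => i _.
rewrite -[u i]mul1r -q1 mulr_suml mulr_sumr; apply: ler_sum => j _.
rewrite mulrA; have := p_ge0 i; have := q_ge0 j; rewrite !le0r.
case/orP=> [/eqP q0|qj]; first by rewrite q0 mulr0 !mul0r.
case/orP=> [/eqP p0|pi]; first by rewrite p0 !mul0r.
by apply: ler_wpM2l; [rewrite mulr_ge0 ?ltW | exact: Fu].
Qed.

Lemma exists_ge_mean (I : finType) (p v : I -> R) c :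
  is_distr p -> c <= \sum_i p i * v i -> exists i, (0 < p i) && (c <= v i).
Proof.
move=> [p_ge0 p1] le_c; apply/existsP; apply: contraLR le_c => /existsPn none.
have [i pi] : exists i, 0 < p i.
  case: (boolP [exists i, 0 < p i]) => [/existsP //|/existsPn p0].
  move/eqP: p1; rewrite big1 1?eq_sym ?oner_eq0 // => i _.
  by apply/eqP; rewrite eq_le p_ge0 andbT leNgt p0.
rewrite -ltNge -subr_gt0 -[c]mul1r -p1 mulr_suml -sumrB (bigD1 i) //=.
apply: ltr_pwDl.
  by rewrite -mulrBr mulr_gt0 // subr_gt0 ltNge; have := none i; rewrite pi.
apply: sumr_ge0 => j _; rewrite -mulrBr.
have := none j; rewrite negb_and -leNgt -ltNge => /orP[pj|vj].
  by rewrite (_ : p j = 0) ?mul0r //; apply/eqP; rewrite eq_le pj p_ge0.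
by rewrite mulr_ge0 // subr_ge0 ltW.
Qed.

End Distributions.

Section HardInputs.
Variables (R : realType) (N r n : nat) (b : 'I_N).
Variable pos : 'I_n * bool * 'I_r -> 'I_N.
Hypotheses (pos_inj : injective pos) (pos_WA : forall i, pos i \in ~: [set b]).
Local Notation WA := (~: [set b]).
Local Notation X := {ffun 'I_n -> bool}.
Implicit Types (x : X) (j : 'I_n).

Definition half j (c : bool) : {set 'I_N} := [set pos (j, c, t) | t : 'I_r].
Definition alice_input x : {set 'I_N} := \bigcup_j half j (x j).

Lemma card_half j c : #|half j c| = r.
Proof. by rewrite card_imset ?card_ord // => t t' /pos_inj []. Qed.

Lemma half_WA j c : half j c \subset WA.
Proof. by apply/subsetP => _ /imsetP[t _ ->]. Qed.

Lemma b_notin_half j c : b \notin half j c.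
Proof. by apply/negP => /(subsetP (half_WA j c)); rewrite !inE eqxx. Qed.

Lemma alice_input_WA x : alice_input x \subset WA.
Proof. by apply/bigcupsP => j _; apply: half_WA. Qed.

Lemma half_sub_alice_input x j : half j (x j) \subset alice_input x.
Proof. exact: (bigcup_sup j). Qed.

Lemma half_alice_input_disjoint x j c : x j != c -> [disjoint half j c & alice_input x].
Proof.
move=> xjc; rewrite -setI_eq0; apply/eqP/setP => e; rewrite !inE.
apply/andP => -[/imsetP[t _ ->] /bigcupP[j' _ /imsetP[t' _ /pos_inj[ej ec _]]]].
by move: xjc; rewrite ec ej eqxx.
Qed.

Variables (P : protocol R N) (eps : R) (L : nat).
Hypotheses (r_ge3 : (3 <= r)%N) (wf : protocol_wf r.+1 WA P)
  (ag : approx_guarantee r.+1 WA P (2 / 3 + eps)) (cm : comm_at_most WA P L).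
Implicit Types (rA : OmegaA P) (rB : OmegaB P).
Local Notation f0 := (hardR R b r set0).

Definition possible_msg x (m : seq bool) :=
  [exists rA : OmegaA P, (0 < pA rA) && (alice (alice_input x) f0 rA == m)].

Definition reveals x j rA :=
  [forall x' : X, possible_msg x' (alice (alice_input x) f0 rA) ==> (x' j == x j)].

Lemma alice_hardR O x rA :
  alice (alice_input x) (hardR R b r O) rA = alice (alice_input x) f0 rA.
Proof.
case: wf => _ _ loc _; apply: loc; rewrite ?alice_input_WA //; try exact: hardR_admissible.
by move=> T TWA; apply: hardR_notin; apply/negP => /(subsetP TWA); rewrite !inE eqxx.
Qed.

Lemma valid_hard_input O x : valid_input WA (alice_input x) [set b] (hardR R b r O).
Proof. by split; [apply: alice_input_WA | rewrite setCK | apply: hardR_admissible]. Qed.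

Local Notation hard_at x j := (hardR R b r (half j (x j))).

Lemma hard_output_le x j rA rB : 0 < pA rA -> 0 < pB rB ->
  hard_at x j (bob_output (alice_input x) [set b] (hard_at x j) rA rB)
    <= 2 / 3 + (reveals x j rA)%:R / 3.
Proof.
move=> pA_gt0 pB_gt0; have [_|] := boolP (reveals x j rA).
  by apply: le_trans (hardR_le1 _ _ _ _ _) _; rewrite /=; lra.
case/forallPn => x'; rewrite negb_imply => /andP[/existsP[rA' /andP[pA'_gt0 /eqP same]] x'j].
have [_ _ _ feas] := wf.
have [sub card_out] := feas _ _ _ _ _ (valid_hard_input (half j (x j)) x') pA'_gt0 pB_gt0.
have -> : bob_output (alice_input x) [set b] (hard_at x j) rA rB =
    bob_output (alice_input x') [set b] (hard_at x j) rA' rB.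
  by rewrite /bob_output !alice_hardR same.
rewrite mul0r addr0; apply: hardR_disjoint; rewrite ?card_half ?b_notin_half //.
rewrite disjoint_sym; apply: disjointWr sub _.
have dO := half_alice_input_disjoint x'j.
by rewrite disjoints_subset setCU subsetI -!disjoints_subset dO
  disjoint_sym disjoints1 b_notin_half.
Qed.

Lemma reveal_prob_ge x j : 3 * eps <= \sum_rA pA rA * (reveals x j rA)%:R.
Proof.
have [pA_distr pB_distr _ _] := wf.
have opt : 2 / 3 + eps <= expected_value P (alice_input x) [set b] (hard_at x j).
  have := ag (valid_hard_input (half j (x j)) x) (T := b |: half j (x j)).
  rewrite hardR_opt ?mulr1 ?b_notin_half //; last lia.
  apply; first by rewrite setUC; apply/setSU/half_sub_alice_input.
  by rewrite cardsU1 b_notin_half card_half.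
have := expectation_le pA_distr pB_distr (@hard_output_le x j).
have -> : \sum_(rA : OmegaA P) pA rA * (2 / 3 + (reveals x j rA)%:R / 3) =
    2 / 3 * \sum_(rA : OmegaA P) pA rA + (\sum_rA pA rA * (reveals x j rA)%:R) / 3.
  by rewrite mulr_sumr mulr_suml -big_split; apply: eq_bigr => rA _ /=; lra.
by case: pA_distr => _ ->; rewrite /expected_value in opt; lra.
Qed.

Lemma exists_seed_revealing x :
  exists rA, (0 < pA rA) && (3 * eps * n%:R <= #|[set j | reveals x j rA]|%:R).
Proof.
case: wf => pA_distr _ _ _; apply: exists_ge_mean pA_distr _.
have -> : \sum_rA pA rA * #|[set j | reveals x j rA]|%:R =
    \sum_j \sum_rA pA rA * (reveals x j rA)%:R.
  rewrite exchange_big; apply: eq_bigr => rA _.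
  rewrite -sum1_card natr_sum mulr_sumr big_mkcond /=.
  by apply: eq_bigr => j _; rewrite inE; case: reveals; rewrite ?mulr1 ?mulr0.
apply: le_trans (ler_sum _ (fun j _ => reveal_prob_ge x j)).
by rewrite sumr_const card_ord mulr_natr.
Qed.

Lemma comm_ge_blocks : 3 * eps * n%:R <= L%:R.
Proof.
pose sel x := xchoose (exists_seed_revealing x).
have /all_and2[sel_pos sel_many] x := andP (xchooseP (exists_seed_revealing x)).
pose M x := alice (alice_input x) f0 (sel x).
pose H x := [set j | reveals x j (sel x)].
have size_M x : (size (M x) <= L)%N.
  exact: cm (alice_input_WA x) (hardR_admissible R b r set0) (sel_pos x).
have M_determines x1 x2 : M x1 = M x2 -> {in H x1, x2 =1 x1}.
  move=> M12 j; rewrite inE => /forallP /(_ x2) /implyP reveal1.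
  apply/eqP/reveal1/existsP; exists (sel x2).
  by rewrite sel_pos; apply/eqP; exact: esym M12.
have [x small] := exists_small_determined_set size_M M_determines.
by apply: le_trans (sel_many x) _; rewrite ler_nat.
Qed.

End HardInputs.

Lemma card_admissible (R : realType) N : admissible_f (fun S : {set 'I_N} => #|S|%:R : R).
Proof.
split=> [A|A B AB|A B]; first by rewrite ler0n.
  by rewrite ler_nat subset_leq_card.
by rewrite -!natrD cardsUI.
Qed.

Lemma comm_gt0 (R : realType) N k (P : protocol R N) rho L (a : 'I_N) :
  (0 < k)%N -> 0 < rho -> protocol_wf k setT P -> approx_guarantee k setT P rho ->
  comm_at_most setT P L -> (0 < L)%N.
Proof.
move=> k_gt0 rho_gt0 [pA_distr pB_distr _ feas] ag cm; rewrite lt0n; apply/eqP => L0.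
pose f (S : {set 'I_N}) : R := #|S|%:R.
have vi (VA : {set 'I_N}) : valid_input setT VA set0 f.
  by split; rewrite ?subsetT ?sub0set //; apply: card_admissible.
have silent (VA : {set 'I_N}) (rA : OmegaA P) : 0 < pA rA -> alice VA f rA = [::].
  move=> pA_gt0; have := cm VA f rA (subsetT VA) (card_admissible R N) pA_gt0.
  by rewrite L0 leqn0 => /nilP.
(* An empty message cannot tell [V_A = [set a]] from [V_A = set0]. *)
have out0 (rA : OmegaA P) (rB : OmegaB P) : 0 < pA rA -> 0 < pB rB ->
    f (bob_output [set a] set0 f rA rB) <= 0.
  move=> pA_gt0 pB_gt0; have [sub _] := feas _ _ _ _ _ (vi set0) pA_gt0 pB_gt0.
  move: sub; rewrite /bob_output !silent // setU0 subset0 => /eqP ->.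
  by rewrite /f cards0.
have := ag _ _ _ (vi [set a]) [set a] (subsetUl _ _); rewrite cards1 => /(_ k_gt0).
have := expectation_le pA_distr pB_distr out0.
rewrite /expected_value [X in _ <= X -> _]big1 => [|rA _]; last by rewrite mulr0.
rewrite /f cards1; lra.
Qed.

Lemma comm_ge_small (R : realType) (eps : R) k N (P : protocol R N.+1) L :
  0 < eps -> eps < 4^-1 -> (N.+1 <= 2 * k)%N ->
  protocol_wf k setT P -> approx_guarantee k setT P (2 / 3 + eps) ->
  comm_at_most setT P L -> 1 / 2 * (N.+1%:R * eps / k%:R) <= L%:R.
Proof.
move=> eps_gt0 eps_lt N_le wf ag cm.
have k_gt0 : (0 < k)%N by lia.
have rho_gt0 : 0 < 2 / 3 + eps by lra.
have : 1 <= L%:R :> R by rewrite ler1n (comm_gt0 ord0 k_gt0 rho_gt0 wf ag cm).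
have N_leR : N.+1%:R <= 2 * k%:R :> R by rewrite -natrM ler_nat.
have : N.+1%:R * eps / k%:R <= 2 * eps by rewrite ler_pdivrMr ?ltr0n //; nra.
lra.
Qed.

Lemma comm_ge_large (R : realType) (eps : R) r N :
  0 < eps -> (3 <= r)%N -> (2 * r <= N)%N ->
  exists WA : {set 'I_N.+1}, forall P : protocol R N.+1,
    protocol_wf r.+1 WA P -> approx_guarantee r.+1 WA P (2 / 3 + eps) ->
    forall L, comm_at_most WA P L -> 1 / 2 * (N.+1%:R * eps / r.+1%:R) <= L%:R.
Proof.
move=> eps_gt0 r_ge3 le_2r_N; set n := (N %/ (2 * r))%N.
have n_gt0 : (0 < n)%N by rewrite divn_gt0; lia.
have N_le : (N.+1 <= 4 * r.+1 * n)%N.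
  by have := ltn_pmod N (_ : 0 < 2 * r)%N; have := divn_eq N (2 * r); rewrite -/n; nia.
have [pos pos_inj pos_WA] : exists2 pos : 'I_n * bool * 'I_r -> 'I_N.+1,
    injective pos & forall i, pos i \in ~: [set ord0].
  apply: exists_inj_into; rewrite !card_prod !card_ord card_bool cardsC1 card_ord /=.
  by have := leq_trunc_div N (2 * r); rewrite -/n; lia.
exists (~: [set ord0]) => P wf ag L cm.
have := comm_ge_blocks pos_inj pos_WA r_ge3 wf ag cm.
have N_leR : N.+1%:R <= 4 * r.+1%:R * n%:R :> R by rewrite -!natrM ler_nat.
have : 0 <= eps * n%:R by rewrite mulr_ge0 ?ler0n ?ltW.
have : N.+1%:R * eps / r.+1%:R <= 4 * n%:R * eps by rewrite ler_pdivrMr ?ltr0n //; nra.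
set A := _ / r.+1%:R; lra.
Qed.

Theorem theorem2 (R : realType) :
  exists c : R, 0 < c /\
  forall eps : R, 0 < eps -> eps < 4^-1 ->
  forall k : nat, eps^-1 <= k%:R ->
  forall N : nat, exists WA : {set 'I_N},
  forall P : protocol R N,
    protocol_wf k WA P ->
    approx_guarantee k WA P (2 / 3 + eps) ->
    forall L : nat, comm_at_most WA P L ->
      c * (N%:R * eps / k%:R) <= L%:R.
Proof.
exists (1 / 2); split; first lra.
move=> eps eps_gt0 eps_lt k k_ge [|N].
  by exists setT => P _ _ L _; rewrite !mul0r mulr0 ler0n.
have k_gt4 : (4 < k)%N.
  have := ler_wpM2l (ltW eps_gt0) k_ge; rewrite mulfV ?gt_eqF // -(ltr_nat R).
  by move=> ?; nra.
have [small|large] := leqP N.+1 (2 * k.-1).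
  exists setT => P wf ag L cm; apply: comm_ge_small wf ag cm => //; lia.
rewrite -(prednK (ltn_trans _ k_gt4)) //; apply: comm_ge_large => //; lia.
Qed.
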